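(* Consider the discrete-time linear system $x_{t+1}=Ax_t+Bu_t+v_t$ with $x_t\in\mathbb{R}^n$, $u_t\in\mathbb{R}^p$, where the disturbances $v_t\in\mathbb{R}^n$ are i.i.d. samples from a distribution $\mathcal{D}$ (of arbitrary form, with bounded moments). Let $Q,R$ be positive definite matrices, $\gamma\in(0,1)$, and let $K\in\mathbb{R}^{p\times n}$ be a feedback gain such that $A_K:=A+BK$ is stable. Set $Q_K:=Q+K^{\rm T}RK$ and let $P$ be the solution of the Lyapunov equation $P=Q+K^{\rm T}RK+\gamma A_K^{\rm T}PA_K$. For $x\in\mathbb{R}^n$ define the random variable $$G^{K}(x)=x^{\rm T}Px+2\sum_{k=0}^{\infty}\gamma^{k+1}w_k^{\rm T}PA_K^{k+1}x+\sum_{k=0}^{\infty}\gamma^{k+1}w_k^{\rm T}Pw_k+2\sum_{k=1}^{\infty}\gamma^{k+1}w_k^{\rm T}P\sum_{\tau=0}^{k-1}A_K^{k-\tau}w_\tau,$$ where $w_k\sim\mathcal{D}$, $k\in\mathbb{N}$, are mutually independent. Then $G^K(x)$ is a fixed-point solution of the random variable Bellman equation $$G^{K}(x)\overset{D}{=}x^{\rm T}Q_Kx+\gamma G^{K}(x'),\qquad x'=A_Kx+v_0,$$ where $v_0\sim\mathcal{D}$ is independent of the $w_k$'s and $\overset{D}{=}$ denotes equality in distribution.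
   Context: The random return of the static linear policy $u_t=Kx_t$ from $x_0=x$ is $\sum_{t=0}^\infty\gamma^t x_t^{\rm T}(Q+K^{\rm T}RK)x_t$; the theorem gives an explicit random variable satisfying its distributional Bellman equation. In $G^K(x')$ the state $x'$ is random and independent of the fresh copies $w_k$ used in the definition of $G^K$. *)

From HB Require Import structures.
From mathcomp Require Import all_boot all_order all_algebra.
From mathcomp Require Import all_classical all_reals all_analysis.
Set Implicit Arguments. Unset Strict Implicit. Unset Printing Implicit Defensive.
Import Order.TTheory GRing.Theory Num.Theory.
Import numFieldNormedType.Exports.
Local Open Scope classical_set_scope.
Local Open Scope ring_scope.

(* Column vector in R^n associated to an n-tuple (R^n is represented,
   for measurability purposes, by n.-tuple R with its product sigma-algebra). *)
Definition col_of (R : realType) (n : nat) (t : n.-tuple R) : 'cV[R]_n :=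
  \col_i tnth t i.

Definition bil (R : realType) (n : nat) (u : 'cV[R]_n) (M : 'M[R]_n)
  (v : 'cV[R]_n) : R := (u^T *m M *m v) ord0 ord0.

Definition posdef (R : realType) (n : nat) (M : 'M[R]_n) : Prop :=
  M^T = M /\ forall x : 'cV[R]_n, x != 0 -> 0 < bil x M x.

Definition stable (R : realType) (n : nat) (M : 'M[R]_n) : Prop :=
  forall (x : 'cV[R]_n) (i : 'I_n),
    (fun k : nat => (M ^+ k *m x) i ord0) @ \oo --> (0 : R).

Definition rsum (R : realType) (F : nat -> R) : R :=
  limn (fun N : nat => \sum_(0 <= k < N) F k).

Definition Gfun (R : realType) (n : nat) (gamma : R) (P AK : 'M[R]_n)
  (w : nat -> 'cV[R]_n) (x : 'cV[R]_n) : R :=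
  bil x P x
  + 2 * rsum (fun k => gamma ^+ k.+1 * bil (w k) P (AK ^+ k.+1 *m x))
  + rsum (fun k => gamma ^+ k.+1 * bil (w k) P (w k))
  + 2 * rsum (fun k => if k == 0%N then 0 else
        gamma ^+ k.+1 * bil (w k) P (\sum_(0 <= tau < k) AK ^+ (k - tau) *m w tau)).

Definition mutually_independent d d' (T : measurableType d)
  (T' : measurableType d') (R : realType) (Pr : probability T R)
  (I : eqType) (Y : I -> T -> T') : Prop :=
  forall (s : seq I) (E : I -> set T'), uniq s ->
    (forall i, measurable (E i)) ->
    Pr (\bigcap_(i in [set` s]) (Y i @^-1` E i)) =
      (\prod_(i <- s) Pr (Y i @^-1` E i))%E.

Definition has_law d d' (T : measurableType d) (T' : measurableType d')
  (R : realType) (Pr : probability T R) (D : probability T' R)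
  (Y : T -> T') : Prop :=
  forall E, measurable E -> Pr (Y @^-1` E) = D E.

Definition eq_in_law d (T : measurableType d) (R : realType)
  (Pr : probability T R) (X Y : T -> R) : Prop :=
  forall E : set R, measurable E -> Pr (X @^-1` E) = Pr (Y @^-1` E).

From HB Require Import structures.
From mathcomp Require Import all_boot all_order all_algebra.
From mathcomp Require Import all_classical all_reals all_analysis.
From mathcomp Require Import measurable_realfun.
From mathcomp Require Import ring lra.
Set Implicit Arguments. Unset Strict Implicit. Unset Printing Implicit Defensive.
Import Order.TTheory GRing.Theory Num.Theory.
Import numFieldNormedType.Exports.
Local Open Scope classical_set_scope.
Local Open Scope ring_scope.

(** Peeling off the [k = 0] terms of the three series defining [G^K(x)] leaves
    [x' Q_K x + gamma G^K(A_K x + w_0)], where the new [G^K] is computed on the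
    shifted noise [(w_(k+1))_k]; besides the Lyapunov equation this only uses
    the symmetry of [P], which stability forces.  The identity needs the series
    to converge, and they do almost surely: the entries of [P A_K^k] are
    bounded, so for [gamma < rho < 1] the series are dominated by
    [sum_k rho^k |w_k|^2], whose expectation is finite because [D] has second
    moments.  Finally, independence and equal laws give the noise sequences
    [(w_0, w_1, ...)] and [(v_0, w_0, w_1, ...)] the same law on the product
    sigma-algebra, so [G^K(x)] has the law of [G^K(x)] computed on the second
    sequence, which is almost surely the right-hand side. *)

(** * Quadratic forms *)

Section bilinear_form.
Variables (R : realType) (n : nat).
Implicit Types (u v z : 'cV[R]_n) (M N : 'M[R]_n).

Lemma bilDl u v M z : bil (u + v) M z = bil u M z + bil v M z.
Proof. by rewrite /bil linearD /= !mulmxDl mxE. Qed.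

Lemma bilDr u M v z : bil u M (v + z) = bil u M v + bil u M z.
Proof. by rewrite /bil mulmxDr mxE. Qed.

Lemma bil0r u M : bil u M 0 = 0.
Proof. by rewrite /bil mulmx0 mxE. Qed.

Lemma bil_sumr u M (I : Type) (r : seq I) (P : pred I) (F : I -> 'cV[R]_n) :
  bil u M (\sum_(i <- r | P i) F i) = \sum_(i <- r | P i) bil u M (F i).
Proof. by rewrite /bil mulmx_sumr summxE. Qed.

Lemma bil_mxD u M N v : bil u (M + N) v = bil u M v + bil u N v.
Proof. by rewrite /bil mulmxDr mulmxDl mxE. Qed.

Lemma bil_mxZ u (c : R) M v : bil u (c *: M) v = c * bil u M v.
Proof. by rewrite /bil -scalemxAr -scalemxAl mxE. Qed.

Lemma bilC u M v : M^T = M -> bil u M v = bil v M u.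
Proof.
move=> MT; rewrite /bil -[in LHS](trmxK (u^T *m M *m v)) mxE.
by rewrite !trmx_mul trmxK MT mulmxA.
Qed.

Lemma bil_mulmxr u M N v : bil u M (N *m v) = bil u (M *m N) v.
Proof. by rewrite /bil !mulmxA. Qed.

Lemma bil_mulmx u M N v : bil (N *m u) M (N *m v) = bil u (N^T *m M *m N) v.
Proof. by rewrite /bil trmx_mul !mulmxA. Qed.

Lemma bil_delta M i j : bil (delta_mx i 0) M (delta_mx j 0) = M i j.
Proof. by rewrite /bil trmx_delta -rowE -colE !mxE. Qed.

Lemma bilE u M v : bil u M v = \sum_j \sum_i u i 0 * M i j * v j 0.
Proof.
rewrite /bil mxE; apply: eq_bigr => j _; rewrite mxE big_distrl /=.
by apply: eq_bigr => i _; rewrite !mxE.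
Qed.

End bilinear_form.

Definition sqnorm (R : realType) (n : nat) (v : 'cV[R]_n) : R :=
  \sum_i v i 0 ^+ 2.

Section entry_bounds.
Variables (R : realType) (n : nat).
Implicit Types (u v : 'cV[R]_n) (M : 'M[R]_n).

Lemma sqnorm_ge0 v : 0 <= sqnorm v.
Proof. by apply: sumr_ge0 => i _; exact: sqr_ge0. Qed.

Lemma sqnorm_le v c : (forall i, `|v i 0| <= c) -> sqnorm v <= n%:R * c ^+ 2.
Proof.
move=> vc; apply: (@le_trans _ _ (\sum_(i < n) c ^+ 2)).
  apply: ler_sum => i _; rewrite -real_normK ?num_real //.
  by apply: lerXn2r; rewrite ?nnegrE ?(le_trans _ (vc i)).
by rewrite sumr_const card_ord mulr_natl.
Qed.

Lemma norm_entry_le_sum M i j : `|M i j| <= \sum_k \sum_l `|M k l|.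
Proof.
rewrite (bigD1 i) //= (bigD1 j) //= -addrA lerDl.
by apply: addr_ge0; apply: sumr_ge0 => *; rewrite ?sumr_ge0.
Qed.

Lemma normM3_le (a b c m : R) : `|b| <= m -> `|a * b * c| <= m * (a ^+ 2 + c ^+ 2).
Proof.
move=> bm; rewrite !normrM -(real_normK (num_real a)) -(real_normK (num_real c)).
have := normr_ge0 a; have := normr_ge0 b; have := normr_ge0 c.
set A := `|a|; set B := `|b|; set C := `|c| => C0 B0 A0.
have AC : A * C <= A ^+ 2 + C ^+ 2 by nra.
have : 0 <= (m - B) * (A * C) by rewrite mulr_ge0 ?mulr_ge0 ?subr_ge0.
have : 0 <= m * (A ^+ 2 + C ^+ 2 - A * C) by rewrite mulr_ge0 ?subr_ge0 ?(le_trans B0).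
nra.
Qed.

Lemma norm_bil_le u M v m : (forall i j, `|M i j| <= m) ->
  `|bil u M v| <= m * n%:R * (sqnorm u + sqnorm v).
Proof.
move=> Mm; rewrite bilE; apply: (le_trans (ler_norm_sum _ _ _)).
apply: (@le_trans _ _ (\sum_(j < n) \sum_(i < n) m * (u i 0 ^+ 2 + v j 0 ^+ 2))).
  apply: ler_sum => j _; apply: (le_trans (ler_norm_sum _ _ _)).
  by apply: ler_sum => i _; exact: normM3_le.
rewrite (eq_bigr (fun j => m * sqnorm u + m *+ n * v j 0 ^+ 2)).
  rewrite big_split /= sumr_const card_ord -mulr_sumr -/(sqnorm v).
  rewrite -(mulr_natr (m * _)) -(mulr_natr m).
  by rewrite le_eqVlt; apply/orP; left; apply/eqP; ring.
move=> j _; rewrite -mulr_sumr big_split /= sumr_const card_ord mulrDr.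
by rewrite mulrnAr mulrnAl.
Qed.

End entry_bounds.

(** * Stability and the Lyapunov equation *)

Lemma norm_le_geometric_eq0 (R : realType) (a c g : R) : 0 < g < 1 ->
  (forall k, `|a| <= g ^+ k * c) -> a = 0.
Proof.
move=> /andP[g0 g1] ac.
have gc : (fun k => g ^+ k * c) @ \oo --> 0 * c.
  by apply: cvgMl; apply: cvg_expr; rewrite gtr0_norm.
have : `|a| <= limn (fun k => g ^+ k * c).
  by apply: limr_ge; [apply/cvg_ex; eexists; exact: gc | exact: nearW].
rewrite (cvg_lim _ gc) // mul0r => a0.
by apply/normr0_eq0/le_anti; rewrite a0 normr_ge0.
Qed.

Section stability.
Variables (R : realType) (n : nat) (A : 'M[R]_n).
Hypothesis A_stable : stable A.

Lemma stable_expr_bounded : exists2 c, 0 <= c & forall k i j, `|(A ^+ k) i j| <= c.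
Proof.
have entry_bounded (ij : 'I_n * 'I_n) : exists c, forall k, `|(A ^+ k) ij.1 ij.2| <= c.
  have /cvgP/cvg_seq_bounded[c [_ cb]] := A_stable (delta_mx ij.2 0) ij.1.
  have c1 : c < c + 1 by rewrite ltrDl.
  by exists (c + 1); move=> k; have := cb _ c1 k; rewrite /= -colE mxE; apply.
have [c cP] := choice entry_bounded.
have c0 ij : 0 <= c ij by exact: le_trans (normr_ge0 _) (cP ij 0%N).
exists (\sum_ij c ij); first exact: sumr_ge0.
move=> k i j; apply: (le_trans (cP (i, j) k)).
by rewrite (bigD1 (i, j)) //= lerDl sumr_ge0.
Qed.

Lemma stable_mulmx_expr_bounded (P : 'M[R]_n) :
  exists2 m, 0 <= m & forall k i j, `|(P *m A ^+ k) i j| <= m.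
Proof.
have [c c0 Akc] := stable_expr_bounded.
exists ((\sum_i \sum_l `|P i l|) * c).
  by rewrite mulr_ge0 //; apply: sumr_ge0 => i _; exact: sumr_ge0.
move=> k i j; rewrite mxE; apply: (le_trans (ler_norm_sum _ _ _)).
apply: (@le_trans _ _ ((\sum_l `|P i l|) * c)).
  by rewrite mulr_suml; apply: ler_sum => l _; rewrite normrM; apply: ler_wpM2l.
apply: ler_wpM2r => //; rewrite [leRHS](bigD1 i) //= lerDl.
by apply: sumr_ge0 => *; rewrite sumr_ge0.
Qed.

(* Iterating the homogeneous equation [D = g A^T D A] satisfied by the
   difference [D = P^T - P] gives [D = g^k (A^k)^T D A^k], and the right-hand
   side vanishes as [k] grows. *)
Lemma lyapunov_sym (P QK : 'M[R]_n) (g : R) : 0 < g < 1 -> QK^T = QK ->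
  P = QK + g *: (A^T *m P *m A) -> P^T = P.
Proof.
move=> g01 QKT Peq; set D := P^T - P.
have DE : D = g *: (A^T *m D *m A).
  have PTE : P^T = QK + g *: (A^T *m P^T *m A).
    by rewrite {1}Peq linearD linearZ /= QKT !trmx_mul trmxK mulmxA.
  rewrite /D {1}PTE {2}Peq mulmxBr mulmxBl scalerBr.
  by rewrite opprD addrACA subrr add0r.
have DkE k : D = g ^+ k *: ((A ^+ k)^T *m D *m A ^+ k).
  elim: k => [|k IH]; first by rewrite expr0 scale1r trmx1 mul1mx mulmx1.
  rewrite {1}IH {1}DE -scalemxAr -scalemxAl scalerA -exprSr.
  have -> : A ^+ k.+1 = A *m A ^+ k by rewrite exprS.
  by rewrite trmx_mul !mulmxA.
have [c c0 Akc] := stable_expr_bounded.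
set mD := \sum_l \sum_m `|D l m|.
have mD0 : 0 <= mD by apply: sumr_ge0 => i _; exact: sumr_ge0.
have /andP[g0 _] := g01.
suff D0 : D = 0 by apply/eqP; rewrite -subr_eq0 -/D D0.
apply/matrixP => i j; rewrite [RHS]mxE.
apply: (norm_le_geometric_eq0 (c := mD * n%:R * (n%:R * c ^+ 2 + n%:R * c ^+ 2)) g01).
move=> k; rewrite {1}(DkE k) mxE -bil_delta -bil_mulmx normrM.
have gk0 : 0 <= g ^+ k by rewrite exprn_ge0 ?ltW.
rewrite (ger0_norm gk0); apply: ler_wpM2l => //.
apply: (le_trans (norm_bil_le _ _ (norm_entry_le_sum D))).
apply: ler_wpM2l; first by rewrite mulr_ge0.
by apply: lerD; apply: sqnorm_le => l; rewrite -colE mxE.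
Qed.

End stability.

(** * The series defining [G^K] *)

Definition tailseq (T : Type) (u : nat -> T) : nat -> T := fun k => u k.+1.

Section real_series.
Variable R : realType.
Implicit Types F G : nat -> R.

Lemma rsum_recl F : cvgn (series (tailseq F)) -> rsum F = F 0%N + rsum (tailseq F).
Proof.
move=> cF; have seriesSE : (fun N => series F N.+1) =
    (fun N => F 0%N + series (tailseq F) N).
  by apply: funext => N; rewrite /series /= big_nat_recl.
suff FE : series F @ \oo --> F 0%N + limn (series (tailseq F)).
  by rewrite /rsum (cvg_lim _ FE).
by rewrite -cvg_shiftS /= seriesSE; apply: cvgD => //; exact: cvg_cst.
Qed.

Lemma rsumZ c F : cvgn (series F) -> rsum (c *: F) = c * rsum F.
Proof. exact: lim_seriesZ. Qed.

Lemma rsumD F G : cvgn (series F) -> cvgn (series G) ->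
  rsum (F + G) = rsum F + rsum G.
Proof. exact: lim_seriesD. Qed.

Lemma is_cvg_series_dominated F G : (forall k, `|F k| <= G k) ->
  cvgn (series G) -> cvgn (series F).
Proof.
move=> FG cG; apply: normed_cvg.
by apply: (series_le_cvg _ _ FG cG) => k //; exact: le_trans (normr_ge0 _) (FG k).
Qed.

End real_series.

Section G_series.
Variables (R : realType) (n : nat) (g : R) (P A : 'M[R]_n).
Implicit Types (u : nat -> 'cV[R]_n) (z : 'cV[R]_n).

Definition state_term z u k := g ^+ k.+1 * bil (u k) P (A ^+ k.+1 *m z).

Definition noise_term u k := g ^+ k.+1 * bil (u k) P (u k).

Definition cross_term u k := if k == 0%N then 0 else
  g ^+ k.+1 * bil (u k) P (\sum_(0 <= tau < k) A ^+ (k - tau) *m u tau).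

Lemma GfunE u z : Gfun g P A u z = bil z P z + 2 * rsum (state_term z u)
  + rsum (noise_term u) + 2 * rsum (cross_term u).
Proof. by []. Qed.

Lemma state_termD z1 z2 u :
  state_term (z1 + z2) u = state_term z1 u + state_term z2 u.
Proof. by apply: funext => k; rewrite /state_term mulmxDr bilDr mulrDr. Qed.

Lemma state_termS z u :
  tailseq (state_term z u) = g *: state_term (A *m z) (tailseq u).
Proof.
apply: funext => k; transitivity (g * state_term (A *m z) (tailseq u) k) => //.
by rewrite /state_term /tailseq exprS -mulrA mulmxA mulmxE -exprSr.
Qed.

Lemma noise_termS u : tailseq (noise_term u) = g *: noise_term (tailseq u).
Proof.
apply: funext => k; transitivity (g * noise_term (tailseq u) k) => //.
by rewrite /noise_term /tailseq exprS -mulrA.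
Qed.

Lemma cross_termS u : tailseq (cross_term u) =
  g *: state_term (u 0%N) (tailseq u) + g *: cross_term (tailseq u).
Proof.
apply: funext => k.
transitivity
  (g * state_term (u 0%N) (tailseq u) k + g * cross_term (tailseq u) k) => //.
rewrite /cross_term /state_term /tailseq /=.
rewrite big_nat_recl // subn0 bilDr mulrDr exprS -!mulrA.
congr (_ + _); case: (k =P 0%N) => [->|_].
  by rewrite big_geq // bil0r !mulr0.
by congr (_ * (_ * bil _ _ _)); apply: eq_bigr => i _; rewrite subSS.
Qed.

Lemma Gfun_bellman (QK : 'M[R]_n) u z : P^T = P ->
  P = QK + g *: (A^T *m P *m A) ->
  cvgn (series (state_term (A *m z) (tailseq u))) ->
  cvgn (series (state_term (u 0%N) (tailseq u))) ->
  cvgn (series (noise_term (tailseq u))) ->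
  cvgn (series (cross_term (tailseq u))) ->
  Gfun g P A u z = bil z QK z + g * Gfun g P A (tailseq u) (A *m z + u 0%N).
Proof.
move=> PT Peq cs cs0 cn cc.
have gcs := @is_cvg_seriesZ _ _ g cs; have gcs0 := @is_cvg_seriesZ _ _ g cs0.
have gcn := @is_cvg_seriesZ _ _ g cn; have gcc := @is_cvg_seriesZ _ _ g cc.
have state_sum : rsum (state_term z u) =
    state_term z u 0 + g * rsum (state_term (A *m z) (tailseq u)).
  by rewrite rsum_recl state_termS ?rsumZ.
have noise_sum : rsum (noise_term u) =
    noise_term u 0 + g * rsum (noise_term (tailseq u)).
  by rewrite rsum_recl noise_termS ?rsumZ.
have cross_sum : rsum (cross_term u) = cross_term u 0 +
    (g * rsum (state_term (u 0%N) (tailseq u)) + g * rsum (cross_term (tailseq u))).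
  by rewrite rsum_recl cross_termS ?rsumD ?rsumZ //; exact: is_cvg_seriesD.
have PzE : bil z P z = bil z QK z + g * bil (A *m z) P (A *m z).
  by rewrite bil_mulmx {1}Peq bil_mxD bil_mxZ.
have Pz'E : bil (A *m z + u 0%N) P (A *m z + u 0%N) = bil (A *m z) P (A *m z)
    + 2 * bil (u 0%N) P (A *m z) + bil (u 0%N) P (u 0%N).
  by rewrite !bilDl !bilDr (bilC (A *m z) (u 0%N) PT); ring.
rewrite !GfunE state_sum noise_sum cross_sum state_termD rsumD // PzE Pz'E.
by rewrite /state_term /noise_term /cross_term /= !expr1; ring.
Qed.

End G_series.

Lemma natr_mul_expr_le (R : realType) (r : R) k : 0 < r < 1 ->
  k%:R * r ^+ k <= (1 - r)^-1.
Proof.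
move=> /andP[r0 r1]; apply: (@le_trans _ _ (series (geometric 1 r) k)).
  rewrite /series /= mulr_natl -[X in _ *+ X]subn0 -sumr_const_nat.
  apply: ler_sum_nat => j /andP[_ jk]; rewrite mul1r.
  by apply: ler_wiXn2l; rewrite ?ltW //; exact: ltnW.
by rewrite -[leRHS]div1r; apply: geometric_le_lim => //; rewrite gtr0_norm.
Qed.

Lemma expr_mul_sum_le_lim (R : realType) (r : R) (a : nat -> R) k :
  0 <= r <= 1 -> (forall t, 0 <= a t) ->
  cvgn (series (fun t => r ^+ t * a t)) ->
  r ^+ k * \sum_(0 <= t < k) a t <= limn (series (fun t => r ^+ t * a t)).
Proof.
move=> /andP[r0 r1] a0 ca; apply: (@le_trans _ _ (series (fun t => r ^+ t * a t) k)).
  rewrite /series /= mulr_sumr; apply: ler_sum_nat => t /andP[_ tk].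
  by apply: ler_wpM2r => //; apply: ler_wiXn2l => //; exact: ltnW.
apply: nondecreasing_cvgn_le => //; apply: nondecreasing_series => t _ _.
by rewrite mulr_ge0 ?exprn_ge0.
Qed.

Definition sqnorm_summable (R : realType) (n : nat) (rho : R)
  (v : nat -> 'cV[R]_n) : Prop :=
  cvgn (series (fun k => rho ^+ k * sqnorm (v k))).

Section G_series_convergence.
Variables (R : realType) (n : nat) (g rho m : R) (P A : 'M[R]_n).
Hypotheses (g0 : 0 < g) (g_rho : g < rho) (rho1 : rho < 1) (m0 : 0 <= m)
  (PAk_bounded : forall k i j, `|(P *m A ^+ k) i j| <= m).
Variable v : nat -> 'cV[R]_n.
Hypothesis v_summable : sqnorm_summable rho v.

Let c := m * n%:R.
Let s k := rho ^+ k * sqnorm (v k).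
Let c0 : 0 <= c. Proof. by rewrite mulr_ge0. Qed.
Let rho0 : 0 < rho. Proof. exact: lt_trans g_rho. Qed.
Let gk0 k : 0 <= g ^+ k. Proof. by rewrite exprn_ge0 ?ltW. Qed.
Let s0 k : 0 <= s k. Proof. by rewrite mulr_ge0 ?sqnorm_ge0 ?exprn_ge0 ?ltW. Qed.
Let gS_le k : g ^+ k.+1 <= g ^+ k.
Proof. by rewrite exprS ler_piMl // ltW // (lt_trans g_rho). Qed.
Let gS_le_rho k : g ^+ k.+1 <= rho ^+ k.
Proof. by rewrite (le_trans (gS_le k)) // lerXn2r ?nnegrE ?ltW. Qed.

Lemma is_cvg_state_term z : cvgn (series (state_term g P A z v)).
Proof.
apply: (@is_cvg_series_dominated _ _ (c *: s + geometric (c * sqnorm z) g)).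
  move=> k; have -> : (c *: s + geometric (c * sqnorm z) g) k =
      c * s k + c * sqnorm z * g ^+ k by [].
  rewrite /state_term bil_mulmxr normrM (ger0_norm (gk0 _)).
  apply: (le_trans (ler_wpM2l (gk0 _) (norm_bil_le _ _ (PAk_bounded k.+1)))).
  have qv0 := sqnorm_ge0 (v k); have qz0 := sqnorm_ge0 z.
  have cq0 : 0 <= c * sqnorm (v k) by rewrite mulr_ge0.
  have cqz0 : 0 <= c * sqnorm z by rewrite mulr_ge0.
  have := gS_le k; have := gS_le_rho k; rewrite -/c /s; nra.
apply: is_cvg_seriesD; first exact: is_cvg_seriesZ.
by apply: is_cvg_geometric_series; rewrite gtr0_norm // (lt_trans g_rho).
Qed.

Lemma is_cvg_noise_term : cvgn (series (noise_term g P v)).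
Proof.
apply: (@is_cvg_series_dominated _ _ ((2 * c) *: s)); last exact: is_cvg_seriesZ.
have Pm i j : `|P i j| <= m by have := PAk_bounded 0 i j; rewrite expr0 mulmx1.
move=> k; have -> : ((2 * c) *: s) k = 2 * c * s k by [].
rewrite /noise_term normrM (ger0_norm (gk0 _)).
apply: (le_trans (ler_wpM2l (gk0 _) (norm_bil_le _ _ Pm))).
have cq0 : 0 <= c * sqnorm (v k) by rewrite mulr_ge0 ?sqnorm_ge0.
have := gS_le_rho k; rewrite -/c /s; nra.
Qed.

(* The [k]-th term is at most [c g^(k+1) (k |v_k|^2 + sum_(t<k) |v_t|^2)].  With
   [r = g / rho], the first part is at most [c rho^k |v_k|^2 / (1 - r)] since
   [k r^k <= 1 / (1 - r)], and the second at most [c r^k sum_t rho^t |v_t|^2]. *)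
Lemma is_cvg_cross_term : cvgn (series (cross_term g P A v)).
Proof.
set r := g / rho; set K := (1 - r)^-1; set M := limn (series s).
have r0 : 0 < r by rewrite divr_gt0.
have r01 : 0 < r < 1 by rewrite r0 /= ltr_pdivrMr // mul1r.
have gE k : g ^+ k = r ^+ k * rho ^+ k by rewrite -exprMn divfK // gt_eqF.
have K0 : 0 <= K by rewrite (le_trans _ (natr_mul_expr_le 0 r01)) // mul0r.
have rhoS k : rho ^+ k * \sum_(0 <= t < k) sqnorm (v t) <= M.
  by apply: expr_mul_sum_le_lim => //; rewrite ?ltW // => t; exact: sqnorm_ge0.
have M0 : 0 <= M by rewrite (le_trans _ (rhoS 0%N)) // big_geq // mulr0.
apply: (@is_cvg_series_dominated _ _ ((c * K) *: s + geometric (c * M) r)); last first.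
  apply: is_cvg_seriesD; first exact: is_cvg_seriesZ.
  by apply: is_cvg_geometric_series; rewrite gtr0_norm //; case/andP: r01.
move=> k; have -> : ((c * K) *: s + geometric (c * M) r) k =
    c * K * s k + c * M * r ^+ k by [].
rewrite /cross_term; case: eqP => [_|/eqP k0].
  rewrite normr0 addr_ge0 ?(mulr_ge0 (mulr_ge0 c0 K0) (s0 k)) //.
  by rewrite mulr_ge0 ?mulr_ge0 // exprn_ge0 ?ltW.
set S := \sum_(0 <= t < k) sqnorm (v t).
have cross_le : `|\sum_(0 <= t < k) bil (v k) P (A ^+ (k - t) *m v t)| <=
    c * (k%:R * sqnorm (v k) + S).
  apply: (le_trans (ler_norm_sum _ _ _)).
  rewrite mulr_natl -[X in _ *+ X]subn0 -sumr_const_nat -big_split /= mulr_sumr.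
  by apply: ler_sum => t _; rewrite bil_mulmxr; exact: norm_bil_le.
rewrite bil_sumr normrM (ger0_norm (gk0 _)).
apply: (le_trans (ler_wpM2l (gk0 _) cross_le)).
have diag_le : g ^+ k.+1 * (k%:R * sqnorm (v k)) <= K * s k.
  have kq0 : 0 <= k%:R * sqnorm (v k) by rewrite mulr_ge0 ?sqnorm_ge0.
  apply: (le_trans (ler_wpM2r kq0 (gS_le k))).
  have -> : g ^+ k * (k%:R * sqnorm (v k)) = k%:R * r ^+ k * s k.
    by rewrite gE /s; ring.
  by apply: ler_wpM2r; [exact: s0 | exact: natr_mul_expr_le].
have past_le : g ^+ k.+1 * S <= M * r ^+ k.
  have S0 : 0 <= S by rewrite sumr_ge0 // => t _; exact: sqnorm_ge0.
  apply: (le_trans (ler_wpM2r S0 (gS_le k))).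
  rewrite gE -mulrA mulrC; apply: ler_wpM2r (rhoS k).
  by rewrite exprn_ge0 ?ltW.
rewrite mulrCA !mulrDr -[c * K * _]mulrA -[c * M * _]mulrA.
by apply: lerD; apply: ler_wpM2l.
Qed.

End G_series_convergence.

Lemma Gfun_bellman_summable (R : realType) (n : nat) (g rho m : R)
    (P A QK : 'M[R]_n) (u : nat -> 'cV[R]_n) (z : 'cV[R]_n) :
  0 < g -> g < rho -> rho < 1 -> 0 <= m ->
  (forall k i j, `|(P *m A ^+ k) i j| <= m) ->
  P^T = P -> P = QK + g *: (A^T *m P *m A) -> sqnorm_summable rho (tailseq u) ->
  Gfun g P A u z = bil z QK z + g * Gfun g P A (tailseq u) (A *m z + u 0%N).
Proof.
move=> g0 g_rho rho1 m0 PAk PT Peq su; apply: Gfun_bellman => //.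
- exact: (is_cvg_state_term g0 g_rho rho1 m0 PAk su).
- exact: (is_cvg_state_term g0 g_rho rho1 m0 PAk su).
- exact: (is_cvg_noise_term g0 g_rho rho1 m0 PAk su).
- exact: (is_cvg_cross_term g0 g_rho rho1 m0 PAk su).
Qed.

(** * Measurability *)

Lemma cvgn_cauchyP (R : realType) (u : nat -> R) : cvgn u <->
  forall k, exists N, forall i j, `|u (N + i)%N - u (N + j)%N| < k.+1%:R^-1.
Proof.
split.
  move=> /cvg_ex[l /cvgrPdist_lt ul] k.
  have e0 : 0 < k.+1%:R^-1 / 2 :> R by rewrite divr_gt0 // invr_gt0 ltr0n.
  have [N _ Nl] := ul _ e0; exists N => i j.
  have := Nl (N + i)%N (leq_addr _ _); have := Nl (N + j)%N (leq_addr _ _).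
  rewrite /= => lj li.
  have -> : u (N + i)%N - u (N + j)%N = (l - u (N + j)%N) - (l - u (N + i)%N).
    by ring.
  by rewrite (le_lt_trans (ler_normB _ _)) // [ltRHS](splitr (k.+1%:R^-1)) ltrD.
move=> uC; apply/cauchy_cvgP/cauchy_exP => e e0.
have [k ke] : exists k : nat, k.+1%:R^-1 < e.
  exists (Num.bound e^-1); rewrite -[ltRHS]invrK ltf_pV2 ?posrE ?ltr0n ?invr_gt0 //.
  by rewrite (lt_trans (archi_boundP _)) ?invr_ge0 ?ltW // ltr_nat.
have [N Nu] := uC k; exists (u N); exists N => // i /= Ni.
rewrite -ball_normE /ball_ /=.
by have := Nu 0%N (i - N)%N; rewrite addn0 subnKC // => /lt_trans; apply.
Qed.

Section measurable_limn.
Context d (X : measurableType d) (R : realType).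

Lemma measurable_normr_lt (f : X -> R) (c : R) : measurable_fun setT f ->
  measurable [set x | `|f x| < c].
Proof.
move=> mf; have := measurableT_comp (@normr_measurable R setT) mf measurableT
  (measurable_itv `]-oo, c[).
by rewrite setTI; congr measurable; apply/seteqP; split => x /=; rewrite in_itv.
Qed.

(* Off the measurable set where [s ^~ x] converges, [limn] is a constant junk
   value. *)
Lemma measurable_fun_limn (s : nat -> X -> R) :
  (forall N, measurable_fun setT (s N)) ->
  measurable_fun setT (fun x => limn (s ^~ x)).
Proof.
move=> ms; set C := [set x | cvgn (s ^~ x)].
have CE : C = \bigcap_k \bigcup_N \bigcap_i \bigcap_j
    [set x | `|s (N + i)%N x - s (N + j)%N x| < k.+1%:R^-1].
  apply/seteqP; split => x /=.
    move/cvgn_cauchyP => sC k _; have [N NC] := sC k.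
    by exists N => // i _ j _; exact: NC.
  move=> sC; apply/cvgn_cauchyP => k; have [N _ NC] := sC k I.
  by exists N => i j; exact: NC i I j I.
have mC : measurable C.
  rewrite CE; apply: bigcapT_measurable => k; apply: bigcupT_measurable => N.
  apply: bigcapT_measurable => i; apply: bigcapT_measurable => j.
  by apply: measurable_normr_lt; exact: measurable_funB.
rewrite -(setUv C); apply/measurable_funU => //; first exact: measurableC.
split.
  apply: (measurable_fun_cvg (h := s)) => [m|x Cx]; last exact: Cx.
  exact: measurable_funS (ms m).
apply: (eq_measurable_fun (cst point)); last exact: measurable_cst.
move=> x; rewrite inE /C /= => nC; apply/esym/getPN => l sl.
by apply: nC; apply/cvg_ex; exists l.
Qed.

Lemma measurable_rsum (F : nat -> X -> R) : (forall k, measurable_fun setT (F k)) ->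
  measurable_fun setT (fun x => rsum (fun k => F k x)).
Proof.
move=> mF; apply: (measurable_fun_limn (s := fun N x => series (F ^~ x) N)) => N.
exact: measurable_sum.
Qed.

End measurable_limn.

Section measurable_columns.
Context d (X : measurableType d) (R : realType) (n : nat).

Definition measurable_col (f : X -> 'cV[R]_n) : Prop :=
  forall i, measurable_fun setT (fun x => f x i 0).

Lemma measurable_col_cst z : measurable_col (fun _ => z).
Proof. by move=> i; exact: measurable_cst. Qed.

Lemma measurable_col_mulmx (M : 'M[R]_n) f : measurable_col f ->
  measurable_col (fun x => M *m f x).
Proof.
move=> mf i; apply: (eq_measurable_fun (fun x => \sum_j M i j * f x j 0)).
  by move=> x _; rewrite mxE.
by apply: measurable_sum => j; apply: measurable_funM.
Qed.

Lemma measurable_colD f g : measurable_col f -> measurable_col g ->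
  measurable_col (fun x => f x + g x).
Proof.
move=> mf mg i; apply: (eq_measurable_fun (fun x => f x i 0 + g x i 0)).
  by move=> x _; rewrite mxE.
exact: measurable_funD.
Qed.

Lemma measurable_col_sum (I : Type) (r : seq I) (f : I -> X -> 'cV[R]_n) :
  (forall i, measurable_col (f i)) -> measurable_col (fun x => \sum_(i <- r) f i x).
Proof.
move=> mf j; apply: (eq_measurable_fun (fun x => \sum_(i <- r) f i x j 0)).
  by move=> x _; rewrite summxE.
by apply: measurable_sum => i; exact: mf.
Qed.

Lemma measurable_bil (M : 'M[R]_n) f g : measurable_col f -> measurable_col g ->
  measurable_fun setT (fun x => bil (f x) M (g x)).
Proof.
move=> mf mg.
apply: (eq_measurable_fun (fun x => \sum_j \sum_i f x i 0 * M i j * g x j 0)).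
  by move=> x _; rewrite bilE.
by do 2![apply: measurable_sum => ?]; do 2?apply: measurable_funM.
Qed.

Lemma measurable_Gfun (g : R) (P A : 'M[R]_n) (u : X -> nat -> 'cV[R]_n)
    (z : X -> 'cV[R]_n) :
  (forall k, measurable_col (u ^~ k)) -> measurable_col z ->
  measurable_fun setT (fun x => Gfun g P A (u x) (z x)).
Proof.
move=> mu mz; rewrite /Gfun.
have mterm k (y : X -> 'cV[R]_n) : measurable_col y ->
    measurable_fun setT (fun x => g ^+ k.+1 * bil (u x k) P (y x)).
  by move=> my; apply: measurable_funM => //; exact: measurable_bil.
repeat apply: measurable_funD.
- exact: measurable_bil.
- apply: measurable_funM => //; apply: measurable_rsum => k.
  by apply: mterm; exact: measurable_col_mulmx.
- by apply: measurable_rsum => k; exact: mterm.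
- apply: measurable_funM => //; apply: measurable_rsum => k.
  case: (k == 0%N) => //; apply: mterm.
  by apply: measurable_col_sum => t; exact: measurable_col_mulmx.
Qed.

End measurable_columns.

(** * The law of the noise sequence *)

Section sequence_space.
Context d (V : measurableType d).

Definition seqspace : Type := nat -> V.

HB.instance Definition _ := Pointed.on seqspace.

Definition coordinate_sets : set (set seqspace) :=
  [set (fun u : seqspace => u i) @^-1` E | i in setT & E in measurable].

Let coordinate_sigma0 : <<s coordinate_sets >> set0.
Proof. exact: sigma_algebra0. Qed.

Let coordinate_sigmaC A : <<s coordinate_sets >> A -> <<s coordinate_sets >> (~` A).
Proof. exact: sigma_algebraC. Qed.

Let coordinate_sigma_bigcup (F : (set seqspace)^nat) :
  (forall i, <<s coordinate_sets >> (F i)) -> <<s coordinate_sets >> (\bigcup_i F i).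
Proof. exact: sigma_algebra_bigcup. Qed.

HB.instance Definition _ := @isMeasurable.Build default_measure_display seqspace
  <<s coordinate_sets >> coordinate_sigma0 coordinate_sigmaC coordinate_sigma_bigcup.

Lemma measurable_coordinate i : measurable_fun setT (fun u : seqspace => u i).
Proof.
by move=> _ E mE; rewrite setTI; apply: sub_sigma_algebra; exists i => //; exists E.
Qed.

Lemma measurable_fun_seqspace d' (T : measurableType d') (f : T -> seqspace) :
  (forall i, measurable_fun setT (fun t => f t i)) -> measurable_fun setT f.
Proof.
move=> mf; apply: (measurability coordinate_sets) => //.
by move=> _ [_ [i _ [E mE <-]] <-]; exact: mf.
Qed.

Definition cylinder (s : seq nat) (E : nat -> set V) : set seqspace :=
  [set u | forall i, i \in s -> E i (u i)].

Definition cylinders : set (set seqspace) :=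
  [set cylinder s E | s in uniq & E in [set E | forall i, measurable (E i)]].

Lemma measurable_cylinder s E : (forall i, measurable (E i)) ->
  measurable (cylinder s E).
Proof.
move=> mE; elim: s => [|i s IH].
  by rewrite (_ : cylinder [::] E = setT) //; apply/seteqP; split => u.
rewrite (_ : cylinder _ E = ((fun u : seqspace => u i) @^-1` E i) `&` cylinder s E).
  apply: measurableI => //; rewrite -[X in measurable X]setTI.
  exact: measurable_coordinate.
apply/seteqP; split => u /=.
  by move=> Eu; split => [|j js]; apply: Eu; rewrite in_cons ?eqxx ?js ?orbT.
by move=> [Ei Es] j; rewrite in_cons => /orP[/eqP ->|]; [exact: Ei | exact: Es].
Qed.

Lemma cylinders_setI_closed : setI_closed cylinders.
Proof.
move=> _ _ [s1 us1 [E1 mE1 <-]] [s2 us2 [E2 mE2 <-]].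
exists (undup (s1 ++ s2)); first exact: undup_uniq.
exists (fun i => (if i \in s1 then E1 i else setT) `&`
                 (if i \in s2 then E2 i else setT)).
  by move=> i; apply: measurableI; case: ifP.
apply/seteqP; split => u /=.
  move=> E12; split=> i i_s; have := E12 i;
    by rewrite mem_undup mem_cat i_s ?orbT => /(_ isT) [].
move=> [E1u E2u] i _; split; case: ifP => // i_s; by [apply: E1u | apply: E2u].
Qed.

Lemma seqspace_measurableE : measurable = <<s cylinders >>.
Proof.
apply/seteqP; split; apply: smallest_sub; do ?exact: smallest_sigma_algebra.
  move=> _ [i _ [E mE <-]]; apply: sub_sigma_algebra.
  exists [:: i] => //; exists (fun j => if j == i then E else setT).
    by move=> j; case: ifP.
  apply/seteqP; split => u /=; first by move=> /(_ i (mem_head _ _)); rewrite eqxx.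
  by move=> Eu j; rewrite inE => /eqP ->; rewrite eqxx.
by move=> _ [s _ [E mE <-]]; exact: measurable_cylinder.
Qed.

End sequence_space.

Section family_seq_law.
Context d (V : measurableType d) d' (T : measurableType d') (R : realType)
  (Pr : probability T R) (D : probability V R) (I : eqType) (Y : I -> T -> V).
Hypotheses (mY : forall i, measurable_fun setT (Y i))
  (lawY : forall i, has_law Pr D (Y i)) (indY : mutually_independent Pr Y).

Definition family_seq (f : nat -> I) (t : T) : seqspace V := fun k => Y (f k) t.

Lemma measurable_family_seq f : measurable_fun setT (family_seq f).
Proof. by apply: measurable_fun_seqspace => k; exact: mY. Qed.

Lemma family_seq_cylinder (f : nat -> I) (g : I -> nat) s E : cancel f g ->
  uniq s -> (forall k, measurable (E k)) ->
  Pr (family_seq f @^-1` cylinder s E) = (\prod_(k <- s) D (E k))%E.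
Proof.
move=> fK us mE.
have -> : family_seq f @^-1` cylinder s E =
    \bigcap_(i in [set` map f s]) (Y i @^-1` E (g i)).
  apply/seteqP; split => t /=.
    by move=> Et _ /mapP[k ks ->]; rewrite fK; exact: Et.
  by move=> Et k ks; have := Et (f k) (map_f f ks); rewrite /= fK.
rewrite indY ?(map_inj_uniq (can_inj fK)) // big_map.
by apply: eq_bigr => k _; rewrite fK lawY.
Qed.

(* Both laws are [prod_k D (E k)] on the cylinders, a pi-system generating the
   product sigma-algebra. *)
Lemma family_seq_law_eq (f1 f2 : nat -> I) (g1 g2 : I -> nat) :
  cancel f1 g1 -> cancel f2 g2 -> forall A, measurable A ->
  Pr (family_seq f1 @^-1` A) = Pr (family_seq f2 @^-1` A).
Proof.
move=> f1K f2K A mA.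
have mf1 := measurable_family_seq f1; have mf2 := measurable_family_seq f2.
change (pushforward Pr (family_seq f1) A = pushforward Pr (family_seq f2) A).
apply: (measure_unique _ (fun=> setT) (@seqspace_measurableE _ V)
  (@cylinders_setI_closed _ V)) => //.
- by move=> _; exists [::] => //; exists (fun=> setT) => //; apply/seteqP; split.
- by apply/seteqP; split => // u _; exists 0%N.
- move=> _ [s us [E mE <-]]; rewrite /pushforward.
  by rewrite [LHS](family_seq_cylinder f1K us mE) [RHS](family_seq_cylinder f2K us mE).
- by move=> _ /=; rewrite /pushforward preimage_setT probability_setT ltry.
Qed.

End family_seq_law.

(** * Almost sure convergence *)

Section ae_summable.
Local Open Scope ereal_scope.

Lemma ge0_integral_has_law d d' (T : measurableType d) (V : measurableType d')
    (R : realType) (Pr : probability T R) (D : probability V R) (Y : T -> V)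
    (f : V -> \bar R) :
  measurable_fun setT Y -> has_law Pr D Y ->
  measurable_fun setT f -> (forall y, 0 <= f y) ->
  \int[Pr]_t f (Y t) = \int[D]_y f y.
Proof.
move=> mY lawY mf f0.
have := ge0_integral_pushforward mY Pr measurableT mf (fun y _ => f0 y).
rewrite preimage_setT => <-; apply: eq_measure_integral => A mA _.
exact: lawY.
Qed.

Context d d' (T : measurableType d) (V : measurableType d') (R : realType)
  (Pr : probability T R) (D : probability V R) (w : nat -> T -> V) (rho : R).
Hypotheses (rho0 : (0 < rho)%R) (rho1 : (rho < 1)%R)
  (mw : forall k, measurable_fun setT (w k)) (lw : forall k, has_law Pr D (w k)).
Variable h : V -> R.
Hypotheses (mh : measurable_fun setT h) (h0 : forall y, (0 <= h y)%R)
  (h_int : \int[D]_y (h y)%:E < +oo).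

Let term k t := ((rho ^+ k * h (w k t))%:E).

Let term0 k t : 0 <= term k t.
Proof. by rewrite lee_fin; apply: mulr_ge0; [rewrite exprn_ge0 ?ltW | exact: h0]. Qed.

Let measurable_term k : measurable_fun setT (term k).
Proof.
apply/measurable_EFinP; apply: measurable_funM => //.
exact: measurableT_comp mh (mw k).
Qed.

(* [E (sum_k rho^k h (w_k)) = sum_k rho^k E h = E h / (1 - rho)]. *)
Let integrable_weighted_series : Pr.-integrable setT (fun t => \sum_(k <oo) term k t).
Proof.
have int_ge0 : 0 <= \int[D]_y (h y)%:E by apply: integral_ge0 => y _; rewrite lee_fin.
set c := fine (\int[D]_y (h y)%:E); have c0 : (0 <= c)%R by rewrite fine_ge0.
have cE : \int[D]_y (h y)%:E = c%:E by rewrite fineK // ge0_fin_numE.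
apply/integrableP; split.
  exact: ge0_emeasurable_sum (fun k t _ _ => term0 k t) (fun k _ => measurable_term k).
rewrite (eq_integral (fun t => \sum_(k <oo) term k t)); last first.
  by move=> t _; rewrite gee0_abs // nneseries_ge0.
rewrite (integral_nneseries _ measurableT measurable_term (fun k t _ => term0 k t)).
rewrite (@eq_eseriesr _ _ (fun k => (c * rho ^+ k)%:E)); last first.
  move=> k _; rewrite (eq_integral (fun t => (rho ^+ k)%:E * (h (w k t))%:E)) //.
  rewrite ge0_integralZl_EFin ?exprn_ge0 ?ltW //; last 2 first.
  - by move=> t _; rewrite lee_fin.
  - exact/measurable_EFinP/(measurableT_comp mh (mw k)).
  rewrite (ge0_integral_has_law (f := fun y => (h y)%:E) (mw k) (lw k)).
  - by rewrite cE -EFinM mulrC.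
  - exact/measurable_EFinP.
  - by move=> y; rewrite lee_fin.
apply: (@le_lt_trans _ _ (c / (1 - rho))%:E); last exact: ltry.
apply: lime_le.
  by apply: is_cvg_nneseries => k _ _; rewrite lee_fin mulr_ge0 ?exprn_ge0 ?(ltW rho0).
apply: nearW => N; rewrite sumEFin lee_fin.
have := @geometric_le_lim R N c rho c0 rho0; rewrite gtr0_norm // => /(_ rho1).
by rewrite /series /=; under eq_bigr do rewrite mulrC.
Qed.

Lemma ae_cvg_weighted_series : exists N, [/\ measurable N, Pr N = 0 &
  forall t, ~ N t -> cvgn (series (fun k => rho ^+ k * h (w k t)))%R].
Proof.
have [N [mN PN sub]] := integrable_ae measurableT integrable_weighted_series.
exists N; split => // t Nt.
apply: nnseries_is_cvg => [k|].
  by apply: mulr_ge0; [rewrite exprn_ge0 ?ltW | exact: h0].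
have : \sum_(k <oo) term k t \is a fin_num.
  by apply: contrapT => fin; apply: Nt; apply: sub => /(_ I).
by rewrite fin_numElt => /andP[].
Qed.

End ae_summable.

Section tuple_noise.
Context (R : realType) (n : nat).

Lemma measurable_sqnorm_col :
  measurable_fun setT (fun y : n.-tuple R => sqnorm (col_of y)).
Proof.
apply: (eq_measurable_fun (fun y : n.-tuple R => \sum_i tnth y i ^+ 2)).
  by move=> y _; apply: eq_bigr => i _; rewrite mxE.
by apply: measurable_sum => i; apply: measurable_funX; exact: measurable_tnth.
Qed.

Lemma integral_sqnorm_col_lt (D : probability (n.-tuple R) R) :
  (forall i, D.-integrable setT (fun y : n.-tuple R => (`|tnth y i| ^+ 2)%:E)) ->
  (\int[D]_y (sqnorm (col_of y))%:E < +oo)%E.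
Proof.
move=> D_int.
rewrite (eq_integral (fun y : n.-tuple R => \sum_(i < n) (`|tnth y i| ^+ 2)%:E));
  last first.
  move=> y _; rewrite sumEFin; congr (_%:E); apply: eq_bigr => i _.
  by rewrite mxE real_normK // num_real.
have mD i : measurable_fun setT (fun y : n.-tuple R => (`|tnth y i| ^+ 2)%:E).
  by have /integrableP[] := D_int i.
have D0 (i : 'I_n) (y : n.-tuple R) : setT y -> (0 <= (`|tnth y i| ^+ 2)%:E)%E.
  by rewrite lee_fin exprn_ge0.
rewrite (ge0_integral_sum D measurableT mD D0).
apply: lte_sum_pinfty => i _; have /integrableP[_] := D_int i.
apply: le_lt_trans; rewrite le_eqVlt; apply/orP; left; apply/eqP.
by apply: eq_integral => y _; rewrite gee0_abs // lee_fin exprn_ge0.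
Qed.

Lemma measurable_col_coordinate k :
  measurable_col (fun u : seqspace (n.-tuple R) => col_of (u k)).
Proof.
move=> i; apply: (eq_measurable_fun (fun u : seqspace (n.-tuple R) => tnth (u k) i)).
  by move=> u _; rewrite mxE.
exact: measurableT_comp (measurable_tnth i) (measurable_coordinate k).
Qed.

End tuple_noise.

Section measure_off_null.
Context d (T : measurableType d) (R : realType) (mu : {measure set T -> \bar R}).
Variables (N : set T) (A B : set T).
Hypotheses (mN : measurable N) (muN : mu N = 0%E).
Hypotheses (mA : measurable A) (mB : measurable B).

Lemma le_measure_off_null : (forall t, ~ N t -> A t -> B t) -> (mu A <= mu B)%E.
Proof.
move=> AB; have mAN : measurable (A `&` ~` N).
  by apply: measurableI => //; exact: measurableC.
apply: (@le_trans _ _ (mu ((A `&` ~` N) `|` N))).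
  apply: le_measure; rewrite ?inE //; first exact: measurableU.
  by move=> t At; have [Nt|Nt] := pselect (N t); [right | left].
rewrite measureU0 //; apply: le_measure; rewrite ?inE // => t [At Nt].
exact: AB.
Qed.

End measure_off_null.

Lemma measure_eq_off_null d (T : measurableType d) (R : realType)
    (mu : {measure set T -> \bar R}) (N A B : set T) :
  measurable N -> mu N = 0%E -> measurable A -> measurable B ->
  (forall t, ~ N t -> (A t <-> B t)) -> mu A = mu B.
Proof.
move=> mN muN mA mB AB; apply/le_anti/andP; split;
  by apply: (le_measure_off_null mN muN) => // t /AB[].
Qed.

Definition seq_cons (T : Type) (x : T) (u : nat -> T) : nat -> T :=
  fun k => if k is k'.+1 then u k' else x.

Section cons_noise_law.
Context d (V : measurableType d) d' (T : measurableType d') (R : realType)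
  (Pr : probability T R) (D : probability V R) (w : nat -> T -> V) (v0 : T -> V).
Hypotheses (mw : forall k, measurable_fun setT (w k)) (mv0 : measurable_fun setT v0)
  (lw : forall k, has_law Pr D (w k)) (lv0 : has_law Pr D v0)
  (indep : mutually_independent Pr
     (fun o : option nat => if o is Some k then w k else v0)).

Let noise t : seqspace V := fun k => w k t.
Let cons_noise t : seqspace V := seq_cons (v0 t) (noise t).

Let measurable_cons_noise : measurable_fun setT cons_noise.
Proof.
by apply: (@measurable_fun_seqspace _ V _ T) => -[|k]; [exact: mv0 | exact: mw].
Qed.

Lemma cons_noise_law_eq A : measurable A ->
  Pr (noise @^-1` A) = Pr (cons_noise @^-1` A).
Proof.
move=> mA; pose Y o := if o is Some k then w k else v0.
have mY o : measurable_fun setT (Y o) by case: o.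
have lY o : has_law Pr D (Y o) by case: o.
pose cons_idx k := if k is k'.+1 then Some k' else None.
have SomeK : cancel Some (fun o => if o is Some k then k else 0%N) by [].
have cons_idxK : cancel cons_idx (fun o => if o is Some k then k.+1 else 0%N) by case.
have -> : cons_noise = family_seq Y cons_idx by apply: funext => t; apply: funext; case.
by rewrite -(family_seq_law_eq mY lY indep SomeK cons_idxK mA).
Qed.

Lemma eq_in_law_cons (F F' : seqspace V -> R) (N : set T) :
  measurable_fun setT F -> measurable_fun setT F' -> measurable N -> Pr N = 0%E ->
  (forall t, ~ N t -> F (seq_cons (v0 t) (fun k => w k t)) =
                      F' (seq_cons (v0 t) (fun k => w k t))) ->
  eq_in_law Pr (fun t => F (fun k => w k t))
               (fun t => F' (seq_cons (v0 t) (fun k => w k t))).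
Proof.
move=> mF mF' mN PN FF' E mE.
have mFE : measurable (F @^-1` E) by rewrite -[X in measurable X]setTI; exact: mF.
have mF'E : measurable (F' @^-1` E) by rewrite -[X in measurable X]setTI; exact: mF'.
have mconsE B : measurable B -> measurable (cons_noise @^-1` B).
  by move=> mB; rewrite -[X in measurable X]setTI; exact: measurable_cons_noise.
rewrite -[LHS]/(Pr (noise @^-1` (F @^-1` E))) cons_noise_law_eq //.
rewrite -[RHS]/(Pr (cons_noise @^-1` (F' @^-1` E))).
apply: (measure_eq_off_null mN PN (mconsE _ mFE) (mconsE _ mF'E)) => t Nt.
change (E (F (cons_noise t)) <-> E (F' (cons_noise t))).
by rewrite FF'.
Qed.

End cons_noise_law.

Theorem theorem1 (R : realType) (n p : nat)
  (A : 'M[R]_n) (B : 'M[R]_(n, p)) (Q : 'M[R]_n) (Rc : 'M[R]_p)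
  (gamma : R) (K : 'M[R]_(p, n)) (P : 'M[R]_n)
  (d : measure_display) (T : measurableType d) (Pr : probability T R)
  (D : probability (n.-tuple R) R)
  (w : nat -> T -> n.-tuple R) (v0 : T -> n.-tuple R) (x : 'cV[R]_n) :
  posdef Q -> posdef Rc ->
  0 < gamma < 1 ->
  stable (A + B *m K) ->
  P = Q + K^T *m Rc *m K + gamma *: ((A + B *m K)^T *m P *m (A + B *m K)) ->
  (* D has bounded (finite) moments of every order *)
  (forall (m : nat) (i : 'I_n),
      D.-integrable setT (fun y : n.-tuple R => (`|tnth y i| ^+ m)%:E)) ->
  (* w_0, w_1, ... and v_0 are random vectors with law D, mutually independent *)
  (forall k, measurable_fun setT (w k)) -> measurable_fun setT v0 ->
  (forall k, has_law Pr D (w k)) -> has_law Pr D v0 ->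
  mutually_independent Pr
    (fun o : option nat => match o with Some k => w k | None => v0 end) ->
  eq_in_law Pr
    (fun t => Gfun gamma P (A + B *m K) (fun k => col_of (w k t)) x)
    (fun t => bil x (Q + K^T *m Rc *m K) x
       + gamma * Gfun gamma P (A + B *m K) (fun k => col_of (w k t))
                   ((A + B *m K) *m x + col_of (v0 t))).
Proof.
move=> [QT _] [RcT _] g01 AK_stable Peq D_int mw mv0 lw lv0 indep.
set AK := A + B *m K in AK_stable Peq *; set QK := Q + K^T *m Rc *m K in Peq *.
have QKT : QK^T = QK by rewrite /QK linearD /= QT !trmx_mul trmxK RcT mulmxA.
have PT := lyapunov_sym AK_stable g01 QKT Peq.
have [m m0 PAk_bounded] := stable_mulmx_expr_bounded AK_stable P.
have /andP[g0 g1] := g01; pose rho := (1 + gamma) / 2.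
have [g_rho rho0 rho1] : [/\ gamma < rho, 0 < rho & rho < 1].
  by rewrite /rho; split; lra.
have [N [mN PN w_summable]] := ae_cvg_weighted_series rho0 rho1 mw lw
  (@measurable_sqnorm_col R n) (fun y => sqnorm_ge0 (col_of y))
  (integral_sqnorm_col_lt (D_int 2%N)).
pose G (u : seqspace (n.-tuple R)) := Gfun gamma P AK (fun k => col_of (u k)) x.
pose G' (u : seqspace (n.-tuple R)) := bil x QK x + gamma *
  Gfun gamma P AK (fun k => col_of (u k.+1)) (AK *m x + col_of (u 0%N)).
apply: (eq_in_law_cons (F := G) (F' := G') mw mv0 lw lv0 indep _ _ mN PN).
- apply: measurable_Gfun => [k|]; first exact: measurable_col_coordinate.
  exact: measurable_col_cst.
- apply: measurable_funD => //; apply: measurable_funM => //.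
  apply: measurable_Gfun => [k|]; first exact: measurable_col_coordinate.
  apply: measurable_colD; first exact: measurable_col_cst.
  exact: measurable_col_coordinate.
move=> t Nt.
exact: (Gfun_bellman_summable _ g0 g_rho rho1 m0 PAk_bounded PT Peq (w_summable t Nt)).
Qed.
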